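(* Consider the following reduced-cyclic-prefix (RCP) ODDM system. Let $M,N,Q$ be positive integers, $T_s>0$, $T=MT_s$, and let $a(t)$ be a pulse with $a(t)=0$ for $|t|\ge QT_s$. Given data symbols $X[m,n]\in\mathbb{C}$, $0\le m\le M-1$, $0\le n\le N-1$, define $$x[m,\dot n]=\frac{1}{\sqrt N}\sum_{n=0}^{N-1}X[m,n]e^{j2\pi\frac{n\dot n}{N}},\quad 0\le \dot n\le N-1,$$ and the prefix $x[m,-1]=x[m,N-1]$. The transmitted baseband signal is $$s(t)=\sum_{m=0}^{M-1}\sum_{\dot n=-1}^{N-1}x[m,\dot n]\,a(t-mT_s-\dot nT).$$ The (noiseless) received baseband signal over $P$ paths is $$r(t)=\sum_{i=1}^{P}h_i e^{j2\pi\nu_i t}\,s\big(t-(\tau_i-b_i t)\big),$$ with complex gains $h_i$, delays $\tau_i=l_iT_s$, Doppler scaling factors $b_i$ and Doppler shifts $\nu_i=\frac{k_i}{NMT_s}$ (where $l_i,k_i$ are real, not necessarily integer). Assume $l_{\min}\le l_i\le l_{\max}$ with $l_{\min},l_{\max}$ integers, $|b_i|\le b_{\max}<1$, and that the synchronization is such that $$\lceil l_{\min}-Q-b_{\max}(NM-1)\rceil=0,\qquad l'_{\max}:=\lfloor l_{\max}+Q+b_{\max}(NM-1)\rfloor<M.$$ The receiver samples $y[m,\dot n]=r(mT_s+\dot nT)$ and computes $$Y[m,n]=\frac{1}{\sqrt N}\sum_{\dot n=0}^{N-1}y[m,\dot n]e^{-j2\pi\frac{n\dot n}{N}}.$$ Then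 for all $0\le m\le M-1$, $0\le n\le N-1$, $$Y[m,n]=\sum_{l=0}^{l'_{\max}}\sum_{k=0}^{N-1}X[(m-l)_M,(n-k)_N]\,\phi[m-l,n-k]\,G_l(m,k),$$ where $$G_l(m,k)=\sum_{i=1}^{P}h_i\, e^{j2\pi\frac{k_i m}{NM}}\frac{1}{N}\sum_{\dot n=0}^{N-1}e^{-j2\pi\frac{\dot n(k-k_i)}{N}}\,a\Big(\big(l-l_i+b_i(m+\dot nM)\big)T_s\Big),$$ and, for integers $m',n'$, $$\phi[m',n']=\begin{cases}1,&0\le m'\le M-1,\\ e^{-j2\pi\frac{n'}{N}},&-M+1\le m'<0.\end{cases}$$
   Context: $(x)_M$ denotes $x$ modulo $M$ taken in $\{0,\dots,M-1\}$, and similarly $(x)_N$. $j$ is the imaginary unit. Noise is ignored. The quantities $b_i=\mathrm{v}_i/c$ model the wideband (Doppler squint) effect: each path has a time-varying delay $\tau_i-b_i t$. *)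

From Stdlib Require Export Reals ZArith List.
From Coquelicot Require Export Coquelicot.
Open Scope R_scope.

Definition cexpj (theta : R) : C := (cos theta, sin theta).

Definition zrange (lo hi : Z) : list Z :=
  map (fun k => (lo + Z.of_nat k)%Z) (seq 0 (Z.to_nat (hi - lo + 1))).

Definition zsum (lo hi : Z) (f : Z -> C) : C :=
  fold_right Cplus (RtoC 0) (map f (zrange lo hi)) .

From Stdlib Require Import Permutation Lia Lra.
Open Scope R_scope.

(* Indexing the transmitted pulses serially by
   v = m0 + dn0 M, the synchronisation conditions and the support of the pulse
   leave only the window u - l'_max <= v <= u, where u = m + dn M; writing
   v = u - l expresses y[m, dn] as a sum over the delays l of x at the delayed
   serial index.  When l > m the delay crosses a block boundary and dn drops by
   one; the reduced cyclic prefix x[., -1] = x[., N-1] makes this the same as a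
   one-sample cyclic shift, i.e. a factor phi on the Fourier coefficients.  The
   DFT of the product of each path factor with this periodic signal is then a
   circular convolution in n, whose kernel is G_l(m, k). *)

(** * Finite sums over integer ranges *)

Lemma zsum_nil lo hi f : (hi < lo)%Z -> zsum lo hi f = 0.
Proof.
  intros H. unfold zsum, zrange.
  replace (Z.to_nat (hi - lo + 1)) with 0%nat by lia. reflexivity.
Qed.

Lemma zsum_cons lo hi f :
  (lo <= hi)%Z -> zsum lo hi f = (f lo + zsum (lo + 1) hi f)%C.
Proof.
  intros H. unfold zsum, zrange.
  replace (Z.to_nat (hi - lo + 1)) with (S (Z.to_nat (hi - (lo + 1) + 1))) by lia.
  cbn [seq map fold_right]. rewrite Z.add_0_r. f_equal.
  rewrite <- seq_shift, !map_map. erewrite map_ext; [reflexivity|].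
  intros k. simpl. f_equal. lia.
Qed.

Lemma Z_interval_ind (Pr : Z -> Z -> Prop) :
  (forall lo hi, (hi < lo)%Z -> Pr lo hi) ->
  (forall lo hi, (lo <= hi)%Z -> Pr (lo + 1)%Z hi -> Pr lo hi) ->
  forall lo hi, Pr lo hi.
Proof.
  intros Hnil Hcons lo hi. remember (Z.to_nat (hi - lo + 1)) as len eqn:Hlen.
  revert lo Hlen. induction len as [|len IH]; intros lo Hlen.
  - apply Hnil; lia.
  - destruct (Z_lt_le_dec hi lo); [apply Hnil; lia|].
    apply Hcons; [lia|]. apply IH; lia.
Qed.

Lemma zsum_ext lo hi f g :
  (forall k, (lo <= k <= hi)%Z -> f k = g k) -> zsum lo hi f = zsum lo hi g.
Proof.
  revert lo hi.
  apply (Z_interval_ind (fun lo hi =>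
    (forall k, (lo <= k <= hi)%Z -> f k = g k) -> zsum lo hi f = zsum lo hi g)).
  - intros lo hi H _. rewrite !zsum_nil; auto.
  - intros lo hi H IH E. rewrite !(zsum_cons lo hi) by auto.
    rewrite E, IH; [reflexivity | intros; apply E; lia | lia].
Qed.

Lemma zsum_plus lo hi f g :
  zsum lo hi (fun k => f k + g k)%C = (zsum lo hi f + zsum lo hi g)%C.
Proof.
  revert lo hi. apply Z_interval_ind.
  - intros lo hi H. rewrite !zsum_nil by auto. ring.
  - intros lo hi H IH. rewrite !(zsum_cons lo hi), IH by auto. ring.
Qed.

Lemma zsum_scal_l c lo hi f :
  (c * zsum lo hi f)%C = zsum lo hi (fun k => c * f k)%C.
Proof.
  revert lo hi. apply Z_interval_ind.
  - intros lo hi H. rewrite !zsum_nil by auto. ring.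
  - intros lo hi H IH. rewrite !(zsum_cons lo hi), <- IH by auto. ring.
Qed.

Lemma zsum_scal_r c lo hi f :
  (zsum lo hi f * c)%C = zsum lo hi (fun k => f k * c)%C.
Proof.
  rewrite Cmult_comm, zsum_scal_l. apply zsum_ext. intros; ring.
Qed.

Lemma zsum_zero lo hi (f : Z -> C) :
  (forall k, (lo <= k <= hi)%Z -> f k = 0) -> zsum lo hi f = 0.
Proof.
  revert lo hi.
  apply (Z_interval_ind (fun lo hi =>
    (forall k, (lo <= k <= hi)%Z -> f k = 0) -> zsum lo hi f = 0)).
  - intros lo hi H _. apply zsum_nil; auto.
  - intros lo hi H IH E. rewrite zsum_cons, E, IH; [ring | intros; apply E; lia | lia | lia].
Qed.

Lemma zsum_swap a b c d (F : Z -> Z -> C) :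
  zsum a b (fun i => zsum c d (fun j => F i j)) =
  zsum c d (fun j => zsum a b (fun i => F i j)).
Proof.
  revert a b. apply Z_interval_ind.
  - intros a b H. rewrite zsum_nil by auto. symmetry.
    apply zsum_zero. intros. apply zsum_nil; auto.
  - intros a b H IH. rewrite zsum_cons, IH, <- zsum_plus by auto.
    apply zsum_ext. intros j _. rewrite (zsum_cons a b) by auto. reflexivity.
Qed.

Lemma zsum_split lo mid hi f :
  (lo <= mid + 1)%Z -> (mid <= hi)%Z ->
  zsum lo hi f = (zsum lo mid f + zsum (mid + 1) hi f)%C.
Proof.
  revert lo mid.
  apply (Z_interval_ind (fun lo mid => (lo <= mid + 1)%Z -> (mid <= hi)%Z ->
    zsum lo hi f = (zsum lo mid f + zsum (mid + 1) hi f)%C)).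
  - intros lo mid H1 H2 H3. rewrite (zsum_nil lo mid) by auto.
    replace (mid + 1)%Z with lo by lia. ring.
  - intros lo mid H IH H2 H3.
    rewrite (zsum_cons lo hi), (zsum_cons lo mid), IH by lia. ring.
Qed.

Lemma zsum_shift c lo hi f :
  zsum lo hi f = zsum (lo + c) (hi + c) (fun k => f (k - c)%Z).
Proof.
  revert lo hi. apply Z_interval_ind.
  - intros lo hi H. rewrite !zsum_nil by lia. reflexivity.
  - intros lo hi H IH.
    rewrite (zsum_cons lo hi), (zsum_cons (lo + c)), IH by lia.
    replace (lo + c - c)%Z with lo by lia.
    replace (lo + 1 + c)%Z with (lo + c + 1)%Z by lia. reflexivity.
Qed.

Lemma in_zrange lo hi k : In k (zrange lo hi) <-> (lo <= k <= hi)%Z.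
Proof.
  unfold zrange. rewrite in_map_iff. split.
  - intros [j [<- Hj]]. apply in_seq in Hj. lia.
  - intros H. exists (Z.to_nat (k - lo)). split; [lia|]. apply in_seq. lia.
Qed.

Lemma fold_Cplus_perm (f : Z -> C) l l' : Permutation l l' ->
  fold_right Cplus 0 (map f l) = fold_right Cplus 0 (map f l').
Proof. induction 1; simpl; try congruence. ring. Qed.

Lemma zsum_reindex lo hi (g : Z -> Z) f :
  (forall k, (lo <= k <= hi)%Z -> (lo <= g k <= hi)%Z) ->
  (forall k1 k2, (lo <= k1 <= hi)%Z -> (lo <= k2 <= hi)%Z -> g k1 = g k2 -> k1 = k2) ->
  zsum lo hi (fun k => f (g k)) = zsum lo hi f.
Proof.
  intros Hrange Hinj. unfold zsum. rewrite <- (map_map g f).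
  apply fold_Cplus_perm, Permutation_map_same_l.
  - apply FinFun.Injective_map_NoDup_in.
    + intros k1 k2 H1 H2. apply in_zrange in H1, H2. auto.
    + apply FinFun.Injective_map_NoDup_in; [intros; lia | apply seq_NoDup].
  - intros k Hk. apply in_map_iff in Hk. destruct Hk as [j [<- Hj]].
    apply in_zrange. apply in_zrange in Hj. auto.
Qed.

Lemma zsum_reflect lo hi f :
  zsum lo hi f = zsum 0 (hi - lo) (fun L => f (hi - L)%Z).
Proof.
  rewrite (zsum_shift (- lo)).
  replace (lo + - lo)%Z with 0%Z by lia. replace (hi + - lo)%Z with (hi - lo)%Z by lia.
  rewrite <- (zsum_reindex 0 (hi - lo) (fun L => hi - lo - L)%Z) by lia.
  apply zsum_ext. intros L _. f_equal. lia.
Qed.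

Lemma zsum_window lo hi u w (f : Z -> C) :
  (lo <= u - w)%Z -> (0 <= w)%Z -> (u <= hi)%Z ->
  (forall v, (lo <= v <= hi)%Z -> (v < u - w \/ u < v)%Z -> f v = 0) ->
  zsum lo hi f = zsum 0 w (fun L => f (u - L)%Z).
Proof.
  intros Hlo Hw Hhi Hout.
  rewrite (zsum_split lo (u - w - 1) hi), (zsum_split (u - w - 1 + 1) u hi) by lia.
  rewrite (zsum_zero lo), (zsum_zero (u + 1)) by (intros; apply Hout; lia).
  rewrite zsum_reflect. replace (u - (u - w - 1 + 1))%Z with w by lia. ring.
Qed.

Lemma zsum_blocks (M : Z) lo hi F : (0 < M)%Z ->
  zsum 0 (M - 1) (fun r => zsum lo hi (fun q => F (r + q * M)%Z)) =
  zsum (lo * M) ((hi + 1) * M - 1) F.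
Proof.
  intros HM. rewrite zsum_swap. revert lo hi. apply Z_interval_ind.
  - intros lo hi H. rewrite !zsum_nil by nia. reflexivity.
  - intros lo hi H IH. rewrite zsum_cons, IH by lia.
    rewrite (zsum_split (lo * M) (lo * M + M - 1)) by nia.
    rewrite (zsum_shift (lo * M) 0). f_equal.
    + replace (M - 1 + lo * M)%Z with (lo * M + M - 1)%Z by lia.
      apply zsum_ext. intros k _. f_equal. lia.
    + replace (lo * M + M - 1 + 1)%Z with ((lo + 1) * M)%Z by lia. reflexivity.
Qed.

(** * Discrete Fourier transform *)

Lemma cexpj_add x y : (cexpj x * cexpj y)%C = cexpj (x + y).
Proof. unfold cexpj, Cmult; simpl. rewrite cos_plus, sin_plus. f_equal; ring. Qed.

Lemma cexpj_periodic_nat x k : cexpj (x + 2 * PI * INR k) = cexpj x.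
Proof.
  unfold cexpj. replace (x + 2 * PI * INR k) with (x + 2 * INR k * PI) by ring.
  rewrite cos_period, sin_period. reflexivity.
Qed.

Lemma cexpj_periodic x y z : x = y + 2 * PI * IZR z -> cexpj x = cexpj y.
Proof.
  intros ->. destruct (Z_le_gt_dec 0 z) as [Hz|Hz].
  - replace z with (Z.of_nat (Z.to_nat z)) by lia.
    rewrite <- INR_IZR_INZ. apply cexpj_periodic_nat.
  - rewrite <- (cexpj_periodic_nat _ (Z.to_nat (- z))). f_equal.
    rewrite INR_IZR_INZ, Z2Nat.id, opp_IZR by lia. ring.
Qed.

Definition idft (N : nat) (F : Z -> C) (d : Z) : C :=
  (RtoC (/ sqrt (INR N)) *
   zsum 0 (Z.of_nat N - 1) (fun n => F n * cexpj (2 * PI * IZR (n * d) / INR N)))%C.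

Definition dft (N : nat) (y : Z -> C) (n : Z) : C :=
  (RtoC (/ sqrt (INR N)) *
   zsum 0 (Z.of_nat N - 1) (fun d => y d * cexpj (- (2 * PI * IZR (n * d) / INR N))))%C.

Lemma dft_ext N y y' n :
  (forall d, (0 <= d <= Z.of_nat N - 1)%Z -> y d = y' d) -> dft N y n = dft N y' n.
Proof. intros E. unfold dft. f_equal. apply zsum_ext. intros d Hd. rewrite E; auto. Qed.

Lemma dft_zsum N lo hi f n :
  dft N (fun d => zsum lo hi (fun j => f j d)) n = zsum lo hi (fun j => dft N (f j) n).
Proof.
  unfold dft. rewrite zsum_scal_l.
  erewrite zsum_ext by (intros; rewrite zsum_scal_r, zsum_scal_l; reflexivity).
  rewrite zsum_swap. apply zsum_ext. intros j _. rewrite zsum_scal_l. reflexivity.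
Qed.

Lemma idft_ext N F F' d :
  (forall j, (0 <= j <= Z.of_nat N - 1)%Z -> F j = F' j) -> idft N F d = idft N F' d.
Proof. intros E. unfold idft. f_equal. apply zsum_ext. intros j Hj. rewrite E; auto. Qed.

Lemma idft_periodic N F d : idft N F (d + Z.of_nat N) = idft N F d.
Proof.
  destruct (Nat.eq_dec N 0) as [->|HN]; [reflexivity|].
  unfold idft. f_equal. apply zsum_ext. intros n _. f_equal.
  apply (cexpj_periodic _ _ n). rewrite !mult_IZR, plus_IZR, <- INR_IZR_INZ.
  field. apply not_0_INR. exact HN.
Qed.

Lemma idft_pred N F d :
  idft N F (d - 1) = idft N (fun j => F j * cexpj (- (2 * PI * IZR j / INR N)))%C d.
Proof.
  unfold idft. f_equal. apply zsum_ext. intros n _.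
  rewrite <- Cmult_assoc, cexpj_add. do 2 f_equal.
  rewrite !mult_IZR, minus_IZR. unfold Rdiv. ring.
Qed.

Lemma dft_mul_idft N g F n : (0 < N)%nat ->
  (forall j q, F (j + q * Z.of_nat N)%Z = F j) ->
  dft N (fun d => g d * idft N F d)%C n =
  (RtoC (/ sqrt (INR N)) * zsum 0 (Z.of_nat N - 1) (fun k => F (n - k)%Z * dft N g k))%C.
Proof.
  intros HN HF. set (c := RtoC (/ sqrt (INR N))).
  set (e := fun x => cexpj (2 * PI * x / INR N)).
  transitivity (zsum 0 (Z.of_nat N - 1) (fun j => zsum 0 (Z.of_nat N - 1) (fun d =>
    c * c * (g d * F j * (e (IZR (j * d)) * cexpj (- (2 * PI * IZR (n * d) / INR N))))))%C).
  { unfold dft, idft. fold c. rewrite zsum_scal_l, zsum_swap. apply zsum_ext. intros d _.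
    rewrite zsum_scal_l, zsum_scal_l, zsum_scal_r, zsum_scal_l.
    apply zsum_ext. intros j _. unfold e. ring. }
  unfold dft. fold c. rewrite zsum_scal_l.
  rewrite <- (zsum_reindex 0 (Z.of_nat N - 1) (fun j => (n - j) mod Z.of_nat N)%Z).
  2:{ intros k Hk. pose proof (Z.mod_pos_bound (n - k) (Z.of_nat N)). lia. }
  2:{ intros k1 k2 Hk1 Hk2 E. rewrite !Z.mod_eq in E by lia.
      set (q1 := ((n - k1) / Z.of_nat N)%Z) in *. set (q2 := ((n - k2) / Z.of_nat N)%Z) in *.
      destruct (Z.lt_total q1 q2) as [H|[H|H]]; nia. }
  apply zsum_ext. intros j Hj. rewrite zsum_scal_l, zsum_scal_l, zsum_scal_l.
  apply zsum_ext. intros d _.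
  set (q := ((n - j) / Z.of_nat N)%Z).
  assert (Hmod : ((n - j) mod Z.of_nat N = n - j - q * Z.of_nat N)%Z)
    by (rewrite Z.mod_eq by lia; unfold q; ring).
  rewrite Hmod, <- (HF (n - j)%Z (- q)%Z).
  replace (n - j + - q * Z.of_nat N)%Z with (n - j - q * Z.of_nat N)%Z by ring.
  replace (e (IZR ((n - j - q * Z.of_nat N) * d)) * cexpj (- (2 * PI * IZR (n * d) / INR N)))%C
    with (cexpj (- (2 * PI * IZR (j * d) / INR N))).
  { ring. }
  unfold e. rewrite cexpj_add. apply (cexpj_periodic _ _ (q * d)).
  rewrite !mult_IZR, !minus_IZR, !mult_IZR, <- INR_IZR_INZ.
  field. apply not_0_INR. lia.
Qed.

Lemma dft_zsum_mul_idft N lo hi lo' hi' g F n : (0 < N)%nat ->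
  (forall L j q, F L (j + q * Z.of_nat N)%Z = F L j) ->
  dft N (fun d => zsum lo hi (fun i => zsum lo' hi' (fun L => g i L d * idft N (F L) d)))%C n =
  zsum lo' hi' (fun L => zsum 0 (Z.of_nat N - 1) (fun k =>
    F L (n - k)%Z * zsum lo hi (fun i => RtoC (/ sqrt (INR N)) * dft N (g i L) k)))%C.
Proof.
  intros HN HF. rewrite dft_zsum.
  erewrite zsum_ext by (intros i _; rewrite dft_zsum; apply zsum_ext; intros L _;
                        rewrite dft_mul_idft by auto; reflexivity).
  rewrite zsum_swap. apply zsum_ext. intros L _.
  erewrite zsum_ext by (intros i _; rewrite zsum_scal_l; reflexivity).
  rewrite zsum_swap. apply zsum_ext. intros k _.
  rewrite zsum_scal_l. apply zsum_ext. intros i _. ring.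
Qed.

Lemma inv_sqrt_sq N : (0 < N)%nat ->
  (RtoC (/ sqrt (INR N)) * RtoC (/ sqrt (INR N)))%C = RtoC (/ INR N).
Proof.
  intros HN. rewrite <- RtoC_mult, <- Rinv_mult, sqrt_sqrt; [reflexivity|].
  apply pos_INR.
Qed.

(* The Doppler phase at t = (m + dn M) Ts splits into a phase depending on m only
   and a fractional frequency offset nu / N in the index dn. *)
Lemma dft_doppler_path (N M : nat) Ts (c : C) nu m (A : Z -> C) k :
  (0 < N)%nat -> (0 < M)%nat -> 0 < Ts ->
  (RtoC (/ sqrt (INR N)) * dft N (fun dn =>
     c * cexpj (2 * PI * (nu / (INR N * INR M * Ts)) * (IZR m * Ts + IZR dn * (INR M * Ts))) *
     A dn) k)%C =
  (c * cexpj (2 * PI * nu * IZR m / (INR N * INR M)) *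
   (RtoC (/ INR N) * zsum 0 (Z.of_nat N - 1) (fun dn =>
      cexpj (- (2 * PI * IZR dn * (IZR k - nu) / INR N)) * A dn)))%C.
Proof.
  intros HN HM HTs. unfold dft.
  rewrite Cmult_assoc, inv_sqrt_sq, !zsum_scal_l by exact HN.
  apply zsum_ext. intros dn _.
  transitivity (c * RtoC (/ INR N) * A dn *
    cexpj (2 * PI * (nu / (INR N * INR M * Ts)) * (IZR m * Ts + IZR dn * (INR M * Ts)) +
           - (2 * PI * IZR (k * dn) / INR N)))%C.
  { rewrite <- cexpj_add. ring. }
  transitivity (c * RtoC (/ INR N) * A dn *
    cexpj (2 * PI * nu * IZR m / (INR N * INR M) + - (2 * PI * IZR dn * (IZR k - nu) / INR N)))%C.
  { do 2 f_equal. rewrite mult_IZR. field.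
    assert (INR N <> 0) by (apply not_0_INR; lia).
    assert (INR M <> 0) by (apply not_0_INR; lia).
    repeat split; lra. }
  rewrite <- cexpj_add. ring.
Qed.

(** * Reduced cyclic prefix *)

Definition rcp_phase (N : nat) (m' n' : Z) : C :=
  if (0 <=? m')%Z then RtoC 1 else cexpj (- (2 * PI * IZR n' / INR N)).

Lemma rcp_phase_periodic N m' j q : (0 < N)%nat ->
  rcp_phase N m' (j + q * Z.of_nat N)%Z = rcp_phase N m' j.
Proof.
  intros HN. unfold rcp_phase. destruct (0 <=? m')%Z; [reflexivity|].
  apply (cexpj_periodic _ _ (- q)). rewrite plus_IZR, !mult_IZR, opp_IZR, <- INR_IZR_INZ.
  field. apply not_0_INR. lia.
Qed.

Lemma delayed_index_div (M m L d : Z) : (0 <= m < M)%Z -> (0 <= L < M)%Z ->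
  ((m + d * M - L) / M = d - if 0 <=? m - L then 0 else 1)%Z.
Proof.
  intros Hm HL. destruct (Z.leb_spec 0 (m - L)).
  - replace (m + d * M - L)%Z with (m - L + d * M)%Z by ring.
    rewrite Z.div_add, Z.div_small by lia. ring.
  - replace (m + d * M - L)%Z with (m - L + M + (d - 1) * M)%Z by ring.
    rewrite Z.div_add, Z.div_small by lia. ring.
Qed.

Lemma idft_cyclic_prefix N F d :
  (if (d =? -1)%Z then idft N F (Z.of_nat N - 1) else idft N F d) = idft N F d.
Proof.
  destruct (Z.eqb_spec d (-1)) as [->|_]; [|reflexivity].
  rewrite <- (idft_periodic N F (-1)). f_equal. lia.
Qed.

Lemma rcp_frame_delayed (M N : nat) (X : Z -> Z -> C) (x : Z -> Z -> C) m L d :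
  (forall m' d', x m' d' =
     if (d' =? -1)%Z then idft N (X m') (Z.of_nat N - 1) else idft N (X m') d') ->
  (0 <= m < Z.of_nat M)%Z -> (0 <= L < Z.of_nat M)%Z ->
  x ((m + d * Z.of_nat M - L) mod Z.of_nat M)%Z ((m + d * Z.of_nat M - L) / Z.of_nat M)%Z =
  idft N (fun j => X ((m - L) mod Z.of_nat M)%Z (j mod Z.of_nat N)%Z * rcp_phase N (m - L) j)%C d.
Proof.
  intros Hx Hm HL.
  rewrite Hx, delayed_index_div, idft_cyclic_prefix by lia.
  replace (m + d * Z.of_nat M - L)%Z with (m - L + d * Z.of_nat M)%Z by ring.
  rewrite Z_mod_plus_full.
  transitivity (idft N (fun j => X ((m - L) mod Z.of_nat M)%Z j * rcp_phase N (m - L) j)%C d).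
  2:{ apply idft_ext. intros j Hj. rewrite (Z.mod_small j) by lia. reflexivity. }
  unfold rcp_phase. destruct (0 <=? m - L)%Z.
  - rewrite Z.sub_0_r. apply idft_ext. intros j _. ring.
  - apply idft_pred.
Qed.

(** * Pulse trains *)

Definition pulse_train (M N : nat) (Ts : R) (a : R -> C) (x : Z -> Z -> C) (t : R) : C :=
  zsum 0 (Z.of_nat M - 1) (fun m => zsum (-1) (Z.of_nat N - 1) (fun dn =>
    x m dn * a (t - IZR m * Ts - IZR dn * (INR M * Ts))%R))%C.

Lemma pulse_train_serial M N Ts (a : R -> C) x t : (0 < M)%nat ->
  pulse_train M N Ts a x t =
  zsum (- Z.of_nat M) (Z.of_nat N * Z.of_nat M - 1) (fun v =>
    x (v mod Z.of_nat M)%Z (v / Z.of_nat M)%Z * a (t - IZR v * Ts)%R)%C.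
Proof.
  intros HM. replace (- Z.of_nat M)%Z with (-1 * Z.of_nat M)%Z by ring.
  replace (Z.of_nat N * Z.of_nat M - 1)%Z with ((Z.of_nat N - 1 + 1) * Z.of_nat M - 1)%Z by ring.
  rewrite <- zsum_blocks by lia.
  apply zsum_ext. intros m Hm. apply zsum_ext. intros dn _.
  rewrite Z_mod_plus_full, Z.div_add, Z.mod_small, Z.div_small by lia.
  rewrite Z.add_0_l, plus_IZR, mult_IZR, <- INR_IZR_INZ. do 2 f_equal. ring.
Qed.

Lemma pulse_train_sample M N Ts (a : R -> C) x lp u t : (0 < M)%nat ->
  (0 <= lp < Z.of_nat M)%Z -> (0 <= u <= Z.of_nat N * Z.of_nat M - 1)%Z ->
  (forall L, (L < 0 \/ lp < L)%Z -> a (t - IZR (u - L) * Ts) = 0) ->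
  pulse_train M N Ts a x t =
  zsum 0 lp (fun L =>
    x ((u - L) mod Z.of_nat M)%Z ((u - L) / Z.of_nat M)%Z * a (t - IZR (u - L) * Ts)%R)%C.
Proof.
  intros HM Hlp Hu Hout. rewrite pulse_train_serial by exact HM.
  apply (zsum_window _ _ u lp); [lia | lia | lia |].
  intros v _ Hv. replace v with (u - (u - v))%Z by ring.
  rewrite Hout by lia. ring.
Qed.

Lemma pulse_vanishes_off_window (Q : nat) Ts (a : R -> C) l b bmax K U lp :
  0 < Ts -> (forall t, Rabs t >= INR Q * Ts -> a t = 0) ->
  Rabs b <= bmax -> 0 <= U <= K ->
  l - INR Q - bmax * K > -1 -> l + INR Q + bmax * K < IZR lp + 1 ->
  forall L, (L < 0 \/ lp < L)%Z -> a ((IZR L - l + b * U) * Ts) = 0.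
Proof.
  intros HTs Ha Hb HU Hlo Hhi L HL. apply Ha.
  apply Rabs_le_between in Hb.
  assert (Hdrift : Rabs (b * U) <= bmax * K).
  { rewrite Rabs_le_between. split; nra. }
  apply Rabs_le_between in Hdrift.
  pose proof (pos_INR Q).
  rewrite Rabs_mult, (Rabs_right Ts) by lra.
  apply Rle_ge, Rmult_le_compat_r; [lra|].
  destruct HL as [HL|HL].
  - apply Zlt_le_succ, IZR_le in HL. rewrite succ_IZR in HL.
    rewrite Rabs_left by lra. lra.
  - apply Zlt_le_succ, IZR_le in HL. rewrite succ_IZR in HL.
    rewrite Rabs_right by lra. lra.
Qed.

Lemma pulse_train_path_sample (M N Q : nat) Ts (a : R -> C) x l b bmax lp m dn t :
  (0 < M)%nat -> (0 < Q)%nat -> 0 < Ts ->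
  (forall t, Rabs t >= INR Q * Ts -> a t = 0) ->
  Rabs b <= bmax ->
  l - INR Q - bmax * (INR N * INR M - 1) > -1 ->
  l + INR Q + bmax * (INR N * INR M - 1) < IZR lp + 1 -> (lp < Z.of_nat M)%Z ->
  (0 <= m <= Z.of_nat M - 1)%Z -> (0 <= dn <= Z.of_nat N - 1)%Z ->
  t = IZR m * Ts + IZR dn * (INR M * Ts) ->
  pulse_train M N Ts a x (t - (l * Ts - b * t)) =
  zsum 0 lp (fun L =>
    x ((m + dn * Z.of_nat M - L) mod Z.of_nat M)%Z ((m + dn * Z.of_nat M - L) / Z.of_nat M)%Z *
    a ((IZR L - l + b * (IZR m + IZR dn * INR M)) * Ts)%R)%C.
Proof.
  intros HM HQ HTs Ha Hb Hlo Hhi Hlp Hm Hdn Ht.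
  set (u := (m + dn * Z.of_nat M)%Z).
  assert (Hu : IZR u = IZR m + IZR dn * INR M)
    by (unfold u; rewrite plus_IZR, mult_IZR, INR_IZR_INZ; reflexivity).
  assert (Harg : forall L, t - (l * Ts - b * t) - IZR (u - L) * Ts =
                           (IZR L - l + b * (IZR m + IZR dn * INR M)) * Ts)
    by (intros L; rewrite Ht, minus_IZR, Hu; ring).
  assert (HU : 0 <= IZR m + IZR dn * INR M <= INR N * INR M - 1).
  { rewrite <- Hu, !INR_IZR_INZ, <- mult_IZR, <- minus_IZR.
    split; apply IZR_le; unfold u; clear - Hm Hdn; nia. }
  assert (Hlp0 : (0 <= lp)%Z).
  { apply le_IZR. apply (le_INR 1) in HQ. simpl in HQ. pose proof (Rabs_pos b). nra. }
  rewrite (pulse_train_sample M N Ts a x lp u); [| exact HM | lia | unfold u; nia |].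
  - apply zsum_ext. intros L _. rewrite Harg. reflexivity.
  - intros L HL. rewrite Harg. eapply pulse_vanishes_off_window; eauto.
Qed.

Theorem theorem1
  (M N Q P : nat) (HM : (0 < M)%nat) (HN : (0 < N)%nat) (HQ : (0 < Q)%nat)

  (Ts : R) (HTs : 0 < Ts)
  (a : R -> C) (Ha : forall t, Rabs t >= INR Q * Ts -> a t = RtoC 0)
  (X : Z -> Z -> C)
  (h : nat -> C) (l_ k_ b : nat -> R)
  (lmin lmax : Z) (bmax : R)
  (Hl : forall i, (i < P)%nat -> IZR lmin <= l_ i <= IZR lmax)
  (Hb : forall i, (i < P)%nat -> Rabs (b i) <= bmax)
  (Hbmax : bmax < 1)
  (Hsync1 : Zceil (IZR lmin - INR Q - bmax * (INR N * INR M - 1)) = 0%Z)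
  (Hsync2 : (Zfloor (IZR lmax + INR Q + bmax * (INR N * INR M - 1)) < Z.of_nat M)%Z) :
  let T := INR M * Ts in
  let lpmax := Zfloor (IZR lmax + INR Q + bmax * (INR N * INR M - 1)) in
  (* x[m, dn] for 0 <= dn <= N-1 *)
  let x0 := fun (m dn : Z) =>
    Cmult (RtoC (/ sqrt (INR N)))
      (zsum 0 (Z.of_nat N - 1)%Z (fun n =>
         Cmult (X m n) (cexpj (2 * PI * IZR (n * dn) / INR N)))) in
  (* with the reduced cyclic prefix x[m,-1] = x[m,N-1] *)
  let x := fun (m dn : Z) =>
    if (dn =? -1)%Z then x0 m (Z.of_nat N - 1)%Z else x0 m dn in
  let s := fun t : R =>
    zsum 0 (Z.of_nat M - 1)%Z (fun m =>
      zsum (-1)%Z (Z.of_nat N - 1)%Z (fun dn =>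
        Cmult (x m dn) (a (t - IZR m * Ts - IZR dn * T)))) in
  let r := fun t : R =>
    zsum 0 (Z.of_nat P - 1)%Z (fun i =>
      let i' := Z.to_nat i in
      let tau := l_ i' * Ts in
      let nu := k_ i' / (INR N * INR M * Ts) in
      Cmult (Cmult (h i') (cexpj (2 * PI * nu * t)))
            (s (t - (tau - b i' * t)))) in
  let y := fun (m dn : Z) => r (IZR m * Ts + IZR dn * T) in
  let Y := fun (m n : Z) =>
    Cmult (RtoC (/ sqrt (INR N)))
      (zsum 0 (Z.of_nat N - 1)%Z (fun dn =>
         Cmult (y m dn) (cexpj (- (2 * PI * IZR (n * dn) / INR N))))) in
  let G := fun (l m k : Z) =>
    zsum 0 (Z.of_nat P - 1)%Z (fun i =>
      let i' := Z.to_nat i in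
      Cmult (Cmult (h i') (cexpj (2 * PI * k_ i' * IZR m / (INR N * INR M))))
        (Cmult (RtoC (/ INR N))
          (zsum 0 (Z.of_nat N - 1)%Z (fun dn =>
             Cmult (cexpj (- (2 * PI * IZR dn * (IZR k - k_ i') / INR N)))
                   (a ((IZR l - l_ i' + b i' * (IZR m + IZR dn * INR M)) * Ts)))))) in
  (* phi[m',n'] is only used for -M+1 <= m' <= M-1 *)
  let phi := fun (m' n' : Z) =>
    if (0 <=? m')%Z then RtoC 1 else cexpj (- (2 * PI * IZR n' / INR N)) in
  forall m n : Z, (0 <= m <= Z.of_nat M - 1)%Z -> (0 <= n <= Z.of_nat N - 1)%Z ->
    Y m n =
    zsum 0 lpmax (fun l =>
      zsum 0 (Z.of_nat N - 1)%Z (fun k =>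
        Cmult (Cmult (X ((m - l) mod Z.of_nat M)%Z ((n - k) mod Z.of_nat N)%Z)
                     (phi (m - l)%Z (n - k)%Z))
              (G l m k))).
Proof.
  intros T lpmax x0 x s r y Y G phi m n Hm Hn.
  change phi with (rcp_phase N).
  assert (Hsync_lo : IZR lmin - INR Q - bmax * (INR N * INR M - 1) > -1).
  { pose proof (Zceil_bound (IZR lmin - INR Q - bmax * (INR N * INR M - 1))) as Hc.
    rewrite Hsync1 in Hc. lra. }
  assert (Hsync_hi : IZR lmax + INR Q + bmax * (INR N * INR M - 1) < IZR lpmax + 1)
    by apply Zfloor_bound.
  pose (F L j := (X ((m - L) mod Z.of_nat M)%Z (j mod Z.of_nat N)%Z * rcp_phase N (m - L) j)%C).
  assert (HF : forall L j q, F L (j + q * Z.of_nat N)%Z = F L j).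
  { intros L j q. unfold F. rewrite Z_mod_plus_full, rcp_phase_periodic by exact HN.
    reflexivity. }
  assert (Hy : forall dn, (0 <= dn <= Z.of_nat N - 1)%Z ->
    y m dn = zsum 0 (Z.of_nat P - 1) (fun i => zsum 0 lpmax (fun L =>
      h (Z.to_nat i) *
      cexpj (2 * PI * (k_ (Z.to_nat i) / (INR N * INR M * Ts)) * (IZR m * Ts + IZR dn * T)) *
      a ((IZR L - l_ (Z.to_nat i) + b (Z.to_nat i) * (IZR m + IZR dn * INR M)) * Ts)%R *
      idft N (F L) dn))%C).
  { intros dn Hdn. apply zsum_ext. intros i Hi. cbv beta zeta.
    change s with (pulse_train M N Ts a x).
    assert (HiP : (Z.to_nat i < P)%nat) by lia.
    rewrite (pulse_train_path_sample M N Q Ts a x _ _ bmax lpmax m dn)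
      by (auto; pose proof (Hl _ HiP); lra).
    rewrite zsum_scal_l. apply zsum_ext. intros L HL.
    rewrite (rcp_frame_delayed M N X x) by (reflexivity || lia).
    unfold F. ring. }
  change (Y m n) with (dft N (y m) n).
  rewrite (dft_ext N _ _ n Hy), dft_zsum_mul_idft by auto.
  apply zsum_ext. intros L _. apply zsum_ext. intros k _.
  unfold F. f_equal.
  unfold G. apply zsum_ext. intros i _. cbv beta zeta.
  apply (dft_doppler_path N M Ts); assumption.
Qed.
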